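(* Let $H$ be a group which is the union of finitely many subsets $S_1,\dots,S_n$: $H=\bigcup_{i=1}^n S_i$. For each $i$ set $C_i:=\langle ab^{-1}\mid a,b\in S_i\rangle$. Then at least one of the subgroups $C_1,\dots,C_n$ has index at most $n$ in $H$. *)

From Stdlib Require Import List Arith.

Record group := Group {
  carrier :> Type;
  gmul : carrier -> carrier -> carrier;
  ginv : carrier -> carrier;
  gone : carrier;
  gmulA : forall x y z, gmul x (gmul y z) = gmul (gmul x y) z;
  gmul1 : forall x, gmul gone x = x;
  gmulV : forall x, gmul (ginv x) x = gone
}.

Definition is_subgroup (H : group) (K : H -> Prop) : Prop :=
  K (gone H) /\ (forall x y, K x -> K y -> K (gmul H x (ginv H y))).

Definition generated (H : group) (A : H -> Prop) : H -> Prop :=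
  fun x => forall K, is_subgroup H K -> (forall a, A a -> K a) -> K x.

Definition diff_subgroup (H : group) (S : H -> Prop) : H -> Prop :=
  generated H (fun x => exists a b, S a /\ S b /\ x = gmul H a (ginv H b)).

(* [H : K] <= n : H is covered by at most n left cosets g K
   (h \in g K  iff  g^{-1} h \in K). *)
Definition index_le (H : group) (K : H -> Prop) (n : nat) : Prop :=
  exists reps : list H, length reps <= n /\
    forall h : H, exists g, In g reps /\ K (gmul H (ginv H g) h).

(** Pick [b_i] in each nonempty [S_i]. For [a] in [S_i] we have
    [a b_i^-1 ∈ C_i], so [a^-1 ∈ b_i^-1 C_i]: the [n] left cosets
    [b_i^-1 C_i] cover [H]. The theorem is then B. H. Neumann's lemma: if a
    group is covered by [n] cosets of subgroups, one of these subgroups has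
    index at most [n].

    For Neumann's lemma, first discard the cosets of subgroups of infinite
    index. They cannot cover [H] on their own: if [K] is one of them, some
    coset [xK] avoids the listed [K]-cosets and is covered by the others, and
    left translates of that covering replace every [K]-coset, removing [K]
    from the list. Translating by coset representatives of the intersection
    [D] of the finite-index subgroups then shows that the finite-index cosets
    alone cover [H]. Finally, if [D] has index [m], each coset [g K_i] contains
    exactly [m / [H:K_i]] cosets of [D], so [m <= Σ m / [H:K_i]] and some
    [[H:K_i]] is at most the number of cosets. *)

From Stdlib Require Import List Arith Lia Bool Classical ClassicalEpsilon.
Import ListNotations.

Definition dec (P : Prop) : bool := if excluded_middle_informative P then true else false.

Lemma dec_true (P : Prop) : dec P = true <-> P.
Proof. unfold dec; destruct excluded_middle_informative; split; auto; discriminate. Qed.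

Lemma list_sum_le_max {A : Type} (g : A -> nat) (l : list A) :
  l <> [] -> exists a, In a l /\ list_sum (map g l) <= length l * g a.
Proof.
  induction l as [|a l IH]; intro Hl; [congruence|].
  destruct l as [|b l].
  - exists a. simpl. split; [left; reflexivity | lia].
  - destruct IH as [e [He Hsum]]; [discriminate|].
    destruct (Nat.le_ge_cases (g a) (g e)).
    + exists e. split; [right; exact He|]. simpl in *. nia.
    + exists a. split; [left; reflexivity|]. simpl in *. nia.
Qed.

Section EquivalenceClasses.

Variables (A : Type) (r : A -> A -> bool).
Hypothesis r_refl : forall x, r x x = true.
Hypothesis r_sym : forall x y, r x y = true -> r y x = true.
Hypothesis r_trans : forall x y z, r x y = true -> r y z = true -> r x z = true.

Lemma filter_class_outside x y l :
  r x y = false -> filter (r y) (filter (fun p => negb (r x p)) l) = filter (r y) l.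
Proof.
  intro Hxy. induction l as [|p l IH]; [reflexivity|]. simpl.
  destruct (r x p) eqn:Exp; simpl; rewrite IH; [|reflexivity].
  destruct (r y p) eqn:Eyp; [|reflexivity].
  rewrite (r_trans _ _ _ Exp (r_sym _ _ Eyp)) in Hxy. discriminate.
Qed.

Lemma class_representatives (l : list A) (c : nat) :
  (forall y, In y l -> c <= length (filter (r y) l)) ->
  exists Q, length Q * c <= length l /\
    forall p, In p l -> exists q, In q Q /\ r q p = true.
Proof.
  remember (length l) as n eqn:En. revert l En.
  induction n as [n IH] using lt_wf_ind; intros l En Hc.
  destruct l as [|x l0].
  - exists []. split; [simpl; lia | intros p []].
  - set (rest := filter (fun p => negb (r x p)) (x :: l0)).
    pose proof (filter_length (r x) (x :: l0)) as Hsplit. fold rest in Hsplit.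
    pose proof (Hc x (or_introl eq_refl)) as Hx.
    assert (Hx1 : 1 <= length (filter (r x) (x :: l0))) by (simpl; rewrite r_refl; simpl; lia).
    destruct (IH (length rest) ltac:(lia) rest eq_refl) as [Q [HQ covQ]].
    { intros y Hy. apply filter_In in Hy as [Hy Hxy]. apply negb_true_iff in Hxy.
      unfold rest. rewrite filter_class_outside by exact Hxy. auto. }
    exists (x :: Q). split; [simpl; nia|].
    intros p Hp. destruct (r x p) eqn:Exp.
    + exists x. split; [left|]; auto.
    + destruct (covQ p) as [q [Hq Hqp]]; [apply filter_In; rewrite Exp; auto|].
      exists q. split; [right|]; auto.
Qed.

End EquivalenceClasses.

Local Notation "x ** y" := (gmul _ x y) (at level 40, left associativity).
Local Notation "x ^-1" := (ginv _ x) (at level 3).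

Section Neumann.

Variable H : group.
Implicit Types x y z g h : H.

Lemma gmulV_r x : x ** x^-1 = gone H.
Proof.
  rewrite <- (gmul1 H (x ** x^-1)), <- (gmulV H x^-1) at 1.
  rewrite <- gmulA, (gmulA H x^-1 x x^-1), gmulV, gmul1. apply gmulV.
Qed.

Lemma gmul1_r x : x ** gone H = x.
Proof. rewrite <- (gmulV H x), gmulA, gmulV_r, gmul1. reflexivity. Qed.

Lemma ginv_unique x y : x ** y = gone H -> x^-1 = y.
Proof. intro E. rewrite <- (gmul1_r x^-1), <- E, gmulA, gmulV, gmul1. reflexivity. Qed.

Lemma ginvK x : x^-1^-1 = x.
Proof. apply ginv_unique, gmulV. Qed.

Lemma ginvM x y : (x ** y)^-1 = y^-1 ** x^-1.
Proof.
  apply ginv_unique. rewrite gmulA, <- (gmulA H x y), gmulV_r, gmul1_r, gmulV_r.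
  reflexivity.
Qed.

Lemma gmulKl x y : x ** (x^-1 ** y) = y.
Proof. rewrite gmulA, gmulV_r, gmul1. reflexivity. Qed.

Lemma gmulVKl x y : x^-1 ** (x ** y) = y.
Proof. rewrite gmulA, gmulV, gmul1. reflexivity. Qed.

Lemma gmulKr x y : x ** y ** y^-1 = x.
Proof. rewrite <- gmulA, gmulV_r, gmul1_r. reflexivity. Qed.

Lemma gmulVKr x y : x ** y^-1 ** y = x.
Proof. rewrite <- gmulA, gmulV, gmul1_r. reflexivity. Qed.

Lemma gmul_shiftK z y h : z ** y^-1 ** (y ** (z^-1 ** h)) = h.
Proof. rewrite <- gmulA, gmulVKl, gmulA, gmulV_r, gmul1. reflexivity. Qed.

Lemma subgroup_inv K x : is_subgroup H K -> K x -> K x^-1.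
Proof. intros [K1 KB] Kx. rewrite <- (gmul1 H x^-1). auto. Qed.

Lemma subgroup_mul K x y : is_subgroup H K -> K x -> K y -> K (x ** y).
Proof.
  intros sgK Kx Ky. rewrite <- (ginvK y). apply (proj2 sgK); auto. apply subgroup_inv; auto.
Qed.

Definition in_coset (K : H -> Prop) g h : Prop := K (g^-1 ** h).

Lemma in_coset_refl K g : is_subgroup H K -> in_coset K g g.
Proof. intro sgK. unfold in_coset. rewrite gmulV. apply sgK. Qed.

Lemma in_coset_sym K g h : is_subgroup H K -> in_coset K g h -> in_coset K h g.
Proof.
  intros sgK Kgh. unfold in_coset. rewrite <- (ginvK g), <- ginvM.
  apply subgroup_inv; auto.
Qed.

Lemma in_coset_trans K g h k :
  is_subgroup H K -> in_coset K g h -> in_coset K h k -> in_coset K g k.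
Proof.
  intros sgK Kgh Khk. unfold in_coset.
  rewrite <- (gmulKl h k), gmulA. apply subgroup_mul; auto.
Qed.

Lemma in_coset_shift K z g h : in_coset K (z ** g) (z ** h) = in_coset K g h.
Proof. unfold in_coset. rewrite ginvM, <- gmulA, gmulVKl. reflexivity. Qed.

Lemma in_coset_mulr K g h k :
  is_subgroup H K -> K k -> in_coset K g (h ** k) -> in_coset K g h.
Proof.
  intros sgK Kk Kghk. unfold in_coset. rewrite <- (gmulKr (g^-1 ** h) k), <- (gmulA H g^-1 h k).
  apply subgroup_mul; auto. apply subgroup_inv; auto.
Qed.

(* A pair [(K, g)] stands for the left coset [gK]. *)
Definition covers (L : list ((H -> Prop) * H)) : Prop :=
  forall h, exists e, In e L /\ in_coset (fst e) (snd e) h.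

Definition shift_coset z (e : (H -> Prop) * H) : (H -> Prop) * H := (fst e, z ** snd e).

Definition finite_index (K : H -> Prop) : Prop := exists m, index_le H K m.

Lemma index_le_mono K m m' : m <= m' -> index_le H K m -> index_le H K m'.
Proof. intros Hm [reps [Hl Hcov]]. exists reps. split; [lia | exact Hcov]. Qed.

Lemma index_le_superset (K K' : H -> Prop) m :
  (forall x, K x -> K' x) -> index_le H K m -> index_le H K' m.
Proof.
  intros sub [reps [Hl Hcov]]. exists reps. split; [exact Hl|].
  intro h. destruct (Hcov h) as [g [Hg Kgh]]. eauto.
Qed.

Lemma index_le_inter (A B : H -> Prop) a b :
  is_subgroup H A -> is_subgroup H B -> index_le H A a -> index_le H B b ->
  index_le H (fun x => A x /\ B x) (a * b).
Proof.
  intros sgA sgB [RA [HRA covA]] [RB [HRB covB]].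
  set (meet u v := epsilon (inhabits u) (fun w => in_coset A u w /\ in_coset B v w)).
  exists (map (fun uv => meet (fst uv) (snd uv)) (list_prod RA RB)). split.
  - rewrite length_map, length_prod. nia.
  - intro h. destruct (covA h) as [u [Hu Auh]], (covB h) as [v [Hv Bvh]].
    exists (meet u v). split.
    + apply in_map_iff. exists (u, v). split; [reflexivity | apply in_prod; auto].
    + destruct (epsilon_spec (inhabits u) (fun w => in_coset A u w /\ in_coset B v w))
        as [Auw Bvw]; [exists h; auto|].
      split.
      * apply (in_coset_trans A _ u); auto using in_coset_sym.
      * apply (in_coset_trans B _ v); auto using in_coset_sym.
Qed.

Definition big_inter (Ks : list (H -> Prop)) x : Prop := forall K, In K Ks -> K x.

Lemma subgroup_big_inter Ks :
  (forall K, In K Ks -> is_subgroup H K) -> is_subgroup H (big_inter Ks).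
Proof.
  intros sgKs. split.
  - intros K HK. apply sgKs, HK.
  - intros x y Kx Ky K HK. apply (proj2 (sgKs K HK)); [apply Kx | apply Ky]; exact HK.
Qed.

Lemma finite_index_big_inter Ks :
  (forall K, In K Ks -> is_subgroup H K /\ finite_index K) -> finite_index (big_inter Ks).
Proof.
  induction Ks as [|K0 Ks IH]; intros HKs.
  - exists 1, [gone H]. split; [reflexivity|]. intro h. exists (gone H).
    split; [left; reflexivity | intros K []].
  - destruct IH as [m1 I1]; [intros; apply HKs; right; auto|].
    destruct (HKs K0 (or_introl eq_refl)) as [sgK0 [m0 I0]].
    exists (m0 * m1). apply (index_le_superset (fun x => K0 x /\ big_inter Ks x)).
    + intros x [K0x Ksx] K [<-|HK]; [exact K0x | exact (Ksx K HK)].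
    + apply index_le_inter; auto. apply subgroup_big_inter. intros; apply HKs; right; auto.
Qed.

Lemma escape_cosets K (l : list H) :
  ~ finite_index K -> exists x, forall g, In g l -> ~ in_coset K g x.
Proof.
  intro infK. apply NNPP; intro N. apply infK. exists (length l), l. split; [lia|].
  intro h. apply NNPP; intro N2. apply N. exists h. intros g Hg Kgh. eauto.
Qed.

Lemma no_cover_by_infinite_index (SG : list (H -> Prop)) :
  (forall K, In K SG -> is_subgroup H K /\ ~ finite_index K) ->
  forall L, (forall e, In e L -> In (fst e) SG) -> ~ covers L.
Proof.
  induction SG as [|K SG IH]; intros HSG L HL covL.
  - destruct (covL (gone H)) as [e [He _]]. exact (HL e He).
  - destruct (HSG K (or_introl eq_refl)) as [sgK infK].
    set (R := filter (fun e => dec (In (fst e) SG)) L).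
    assert (outside_R : forall e, In e L -> ~ In e R -> fst e = K).
    { intros e He HnR. destruct (HL e He) as [|HeSG]; [auto|].
      exfalso. apply HnR, filter_In. rewrite dec_true. auto. }
    destruct (escape_cosets K (map snd L) infK) as [x Hx].
    assert (xK_in_R : forall k, K k -> exists r, In r R /\ in_coset (fst r) (snd r) (x ** k)).
    { intros k Kk. destruct (covL (x ** k)) as [e [He Hek]].
      destruct (classic (In e R)) as [HR|HnR]; [eauto|exfalso].
      rewrite (outside_R e He HnR) in Hek.
      apply (Hx (snd e)); [apply in_map; exact He | exact (in_coset_mulr _ _ _ _ sgK Kk Hek)]. }
    apply (IH (fun K' HK' => HSG K' (or_intror HK'))
              (R ++ flat_map (fun e => map (shift_coset (snd e ** x^-1)) R) L)).
    + intros e He. apply in_app_or in He as [He|He].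
      * apply filter_In in He as [_ He]. apply dec_true, He.
      * apply in_flat_map in He as [e0 [_ He]]. apply in_map_iff in He as [r [<- Hr]].
        apply filter_In in Hr as [_ Hr]. apply dec_true, Hr.
    + intro h. destruct (covL h) as [e [He Heh]].
      destruct (classic (In e R)) as [HR|HnR].
      * exists e. split; [apply in_or_app; auto | exact Heh].
      * rewrite (outside_R e He HnR) in Heh.
        destruct (xK_in_R _ Heh) as [r [Hr Hrh]].
        exists (shift_coset (snd e ** x^-1) r). split.
        -- apply in_or_app; right. apply in_flat_map. exists e. split; [auto | apply in_map; auto].
        -- cbn [shift_coset fst snd]. rewrite <- (gmul_shiftK (snd e) x h), in_coset_shift.
           exact Hrh.
Qed.

Lemma finite_index_cosets_cover L :
  (forall e, In e L -> is_subgroup H (fst e)) -> covers L ->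
  covers (filter (fun e => dec (finite_index (fst e))) L).
Proof.
  intros sgL covL. set (F := filter (fun e => dec (finite_index (fst e))) L).
  apply NNPP; intro NcovF.
  assert (Hy : exists y, forall e, In e F -> ~ in_coset (fst e) (snd e) y).
  { apply NNPP; intro N. apply NcovF. intro h. apply NNPP; intro N2. apply N.
    exists h. intros e He Heh. eauto. }
  destruct Hy as [y Hy].
  assert (HF : forall K, In K (map fst F) -> is_subgroup H K /\ finite_index K).
  { intros K HK. apply in_map_iff in HK as [e [<- He]]. apply filter_In in He as [He Hfin].
    split; [auto | apply dec_true, Hfin]. }
  destruct (finite_index_big_inter _ HF) as [m [P [_ covP]]].
  set (R := filter (fun e => negb (dec (finite_index (fst e)))) L).
  apply (no_cover_by_infinite_index (map fst R)) with
    (L := flat_map (fun p => map (shift_coset (p ** y^-1)) R) P).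
  - intros K HK. apply in_map_iff in HK as [e [<- He]]. apply filter_In in He as [He Hinf].
    split; [auto|]. intro Hfin. rewrite (proj2 (dec_true _) Hfin) in Hinf. discriminate.
  - intros e He. apply in_flat_map in He as [p [_ He]].
    apply in_map_iff in He as [e0 [<- He0]]. exact (in_map fst R e0 He0).
  - intro h. destruct (covP h) as [p [Hp Dph]].
    destruct (covL (y ** (p^-1 ** h))) as [e [He Heh]].
    destruct (dec (finite_index (fst e))) eqn:Efin.
    + exfalso. assert (HeF : In e F) by (apply filter_In; auto).
      apply (Hy e HeF). apply (in_coset_mulr _ _ _ (p^-1 ** h)); auto.
      apply Dph, in_map, HeF.
    + exists (shift_coset (p ** y^-1) e). split.
      * apply in_flat_map. exists p. split; [auto|]. apply in_map, filter_In. rewrite Efin. auto.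
      * cbn [shift_coset fst snd]. rewrite <- (gmul_shiftK p y h), in_coset_shift. exact Heh.
Qed.

Definition transversal (D : H -> Prop) (P : list H) : Prop :=
  NoDup P /\ (forall h, exists p, In p P /\ in_coset D p h) /\
  (forall p q, In p P -> In q P -> in_coset D p q -> p = q).

Lemma transversal_exists D : is_subgroup H D -> finite_index D -> exists P, transversal D P.
Proof.
  intros sgD [m [l [_ covl]]].
  assert (Hl : exists P, NoDup P /\ (forall a, In a l -> exists p, In p P /\ in_coset D p a) /\
                 (forall p q, In p P -> In q P -> in_coset D p q -> p = q)).
  { clear covl. induction l as [|a l [P [nodupP [covP irrP]]]].
    - exists []. split; [constructor|]. split; [intros a []|]. intros p q [].
    - destruct (classic (exists p, In p P /\ in_coset D p a)) as [Ha|Ha].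
      + exists P. split; [exact nodupP|]. split; [|exact irrP]. intros b [<-|Hb]; auto.
      + exists (a :: P). split; [|split].
        * constructor; [|exact nodupP]. intro HaP. apply Ha.
          exists a. split; [exact HaP | apply in_coset_refl, sgD].
        * intros b [<-|Hb]; [exists a; split; [left; reflexivity | apply in_coset_refl, sgD]|].
          destruct (covP b Hb) as [p [? ?]]. exists p. split; [right|]; auto.
        * intros p q [<-|Hp] [<-|Hq] Dpq; auto; exfalso; apply Ha; eauto using in_coset_sym. }
  destruct Hl as [P [nodupP [covP irrP]]]. exists P. split; [exact nodupP|]. split; [|exact irrP].
  intro h. destruct (covl h) as [g [Hg Dgh]]. destruct (covP g Hg) as [p [Hp Dpg]].
  exists p. split; [exact Hp | apply (in_coset_trans D _ g); auto].
Qed.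

Section CountingCosets.

Variables (D K : H -> Prop) (P : list H).
Hypotheses (sgD : is_subgroup H D) (sgK : is_subgroup H K) (subDK : forall x, D x -> K x).
Hypothesis transP : transversal D P.

Definition rep h : H := epsilon (inhabits h) (fun p => In p P /\ in_coset D p h).

Lemma rep_spec h : In (rep h) P /\ in_coset D (rep h) h.
Proof. unfold rep. apply epsilon_spec, (proj1 (proj2 transP)). Qed.

Definition reps_in g : list H := filter (fun p => dec (in_coset K g p)) P.

(* Left multiplication by [g' g^-1] maps the [D]-cosets inside [gK] injectively
   into those inside [g'K]. *)
Lemma reps_in_length_le g g' : length (reps_in g) <= length (reps_in g').
Proof.
  destruct transP as [nodupP [_ irrP]].
  set (z := g' ** g^-1).
  rewrite <- (length_map (fun p => rep (z ** p)) (reps_in g)).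
  apply NoDup_incl_length.
  - apply NoDup_map_NoDup_ForallPairs; [|apply NoDup_filter, nodupP].
    intros a b Ha Hb Eab. apply filter_In in Ha as [Ha _]. apply filter_In in Hb as [Hb _].
    apply irrP; auto. rewrite <- (in_coset_shift D z).
    apply (in_coset_trans D _ (rep (z ** a))); auto.
    + apply in_coset_sym, rep_spec; auto.
    + rewrite Eab. apply rep_spec.
  - intros w Hw. apply in_map_iff in Hw as [p [<- Hp]].
    apply filter_In in Hp as [_ Kgp]. rewrite dec_true in Kgp.
    apply filter_In. split; [apply rep_spec|]. apply dec_true.
    apply (in_coset_trans K _ (z ** p)); auto.
    + assert (Ez : z ** g = g') by apply gmulVKr. rewrite <- Ez, in_coset_shift. exact Kgp.
    + apply in_coset_sym; auto. apply subDK, rep_spec.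
Qed.

Lemma index_le_of_reps_length g m : length P <= m * length (reps_in g) -> index_le H K m.
Proof.
  intro Hm. destruct transP as [_ [covP _]].
  destruct (class_representatives H (fun p q => dec (in_coset K p q))) with
    (l := P) (c := length (reps_in g)) as [Q [HQ covQ]].
  - intro x. apply dec_true, in_coset_refl, sgK.
  - intros x y Kxy. apply dec_true, in_coset_sym, dec_true; auto.
  - intros x y w Kxy Kyw. rewrite dec_true in Kxy, Kyw.
    apply dec_true, (in_coset_trans K _ y); auto.
  - intros y _. apply reps_in_length_le.
  - exists Q. split.
    + destruct (covP (gone H)) as [p0 [Hp0 _]].
      assert (1 <= length P) by (destruct P; [destruct Hp0 | simpl; lia]). nia.
    + intro h. destruct (covP h) as [p [Hp Dph]]. destruct (covQ p Hp) as [q [Hq Kqp]].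
      exists q. split; [exact Hq|]. rewrite dec_true in Kqp.
      apply (in_coset_trans K _ p); auto. apply subDK, Dph.
Qed.

End CountingCosets.

Lemma neumann_finite_index F :
  (forall e, In e F -> is_subgroup H (fst e) /\ finite_index (fst e)) -> covers F ->
  exists e, In e F /\ index_le H (fst e) (length F).
Proof.
  intros HF covF.
  set (D := big_inter (map fst F)).
  assert (HFK : forall K, In K (map fst F) -> is_subgroup H K /\ finite_index K).
  { intros K HK. apply in_map_iff in HK as [e [<- He]]. auto. }
  assert (sgD : is_subgroup H D) by (apply subgroup_big_inter; intros; apply HFK; auto).
  destruct (transversal_exists D sgD (finite_index_big_inter _ HFK)) as [P transP].
  set (cnt := fun e => length (reps_in (fst e) P (snd e))).
  assert (HP : length P <= list_sum (map cnt F)).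
  { unfold cnt. rewrite <- length_flat_map. apply NoDup_incl_length; [apply transP|].
    intros p Hp. destruct (covF p) as [e [He Hep]]. apply in_flat_map. exists e.
    split; [exact He|]. apply filter_In. split; [exact Hp | apply dec_true, Hep]. }
  destruct (list_sum_le_max cnt F) as [e [He Hmax]].
  { intro E. destruct (covF (gone H)) as [e [He _]]. rewrite E in He. destruct He. }
  exists e. split; [exact He|].
  apply (index_le_of_reps_length D (fst e) P sgD (proj1 (HF e He))) with (g := snd e).
  - intros x Dx. apply Dx, in_map, He.
  - exact transP.
  - change (length P <= length F * cnt e). lia.
Qed.

Lemma neumann_lemma L :
  (forall e, In e L -> is_subgroup H (fst e)) -> covers L ->
  exists e, In e L /\ index_le H (fst e) (length L).
Proof.
  intros sgL covL. set (F := filter (fun e => dec (finite_index (fst e))) L).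
  destruct (neumann_finite_index F) as [e [He Hidx]].
  - intros e He. apply filter_In in He as [He Hfin]. split; [auto | apply dec_true, Hfin].
  - apply finite_index_cosets_cover; auto.
  - apply filter_In in He as [He _]. exists e. split; [exact He|].
    eapply index_le_mono; [apply filter_length_le | exact Hidx].
Qed.

Lemma generated_subgroup (A : H -> Prop) : is_subgroup H (generated H A).
Proof.
  split.
  - intros K sgK _. apply sgK.
  - intros x y Ax Ay K sgK HA. apply (proj2 sgK); [apply Ax | apply Ay]; auto.
Qed.

Lemma inv_in_diff_coset (S : H -> Prop) a b :
  S a -> S b -> in_coset (diff_subgroup H S) b^-1 a^-1.
Proof.
  intros Sa Sb. unfold in_coset. rewrite ginvK.
  intros K _ HK. apply HK. exists b, a. auto.
Qed.

End Neumann.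

Theorem corollary2p3 (H : group) (n : nat) (S : nat -> H -> Prop)
  (cover : forall h : H, exists i, i < n /\ S i h) :
  exists i, i < n /\ index_le H (diff_subgroup H (S i)) n.
Proof.
  set (b i := epsilon (inhabits (gone H)) (S i)).
  set (L := map (fun i => (diff_subgroup H (S i), (b i)^-1)) (seq 0 n)).
  destruct (neumann_lemma H L) as [e [He Hidx]].
  - intros e He. apply in_map_iff in He as [i [<- _]]. apply generated_subgroup.
  - intro h. destruct (cover h^-1) as [i [Hi Sih]].
    exists (diff_subgroup H (S i), (b i)^-1). split.
    + apply in_map_iff. exists i. split; [reflexivity | apply in_seq; lia].
    + cbn [fst snd]. rewrite <- (ginvK H h).
      apply inv_in_diff_coset; [exact Sih | apply epsilon_spec; eauto].
  - apply in_map_iff in He as [i [<- Hi]]. apply in_seq in Hi.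
    exists i. split; [lia|]. unfold L in Hidx. rewrite length_map, length_seq in Hidx. exact Hidx.
Qed.
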